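(* Let $n\ge 3$ and $\mathbf d\in\mathbb R_A^{\binom n2}$. Suppose $A_1$ is the unique Condorcet winner and $A_n$ the unique Condorcet loser of $\mathbf d$. Let $\mathbf d_{st}$ be the orthogonal projection of $\mathbf d$ onto $\mathbb{ST}_A^n$. Then $A_1$ is strictly ranked above $A_n$ in $\mathbf d_{st}$, i.e., the $(1,n)$ entry of $\mathbf d_{st}$ is strictly positive.
   Context: $\mathbb R_A^{\binom n2}$ denotes the space of vectors $\mathbf d=(d_{1,2},\dots,d_{1,n};d_{2,3},\dots;d_{n-1,n})$ indexed by pairs $i<j$ of $\{1,\dots,n\}$, with convention $d_{j,i}=-d_{i,j}$, carrying the standard Euclidean inner product. The entry $d_{i,j}$ compares alternatives $A_i,A_j$: $A_i$ is ranked above $A_j$ iff $d_{i,j}>0$. $A_j$ is a Condorcet winner of $\mathbf d$ if $d_{j,k}>0$ for all $k\ne j$, and a Condorcet loser if $d_{j,k}<0$ for all $k\neq j$. A vector is strongly transitive if $d_{i,j}+d_{j,k}=d_{i,k}$ for all triples $i,j,k$; $\mathbb{ST}_A^n$ is the linear subspace of strongly transitive vectors. *)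

From mathcomp Require Import all_boot all_order all_algebra.
Set Implicit Arguments. Unset Strict Implicit. Unset Printing Implicit Defensive.
Import Order.TTheory GRing.Theory Num.Theory.
Local Open Scope ring_scope.

(* A vector of R_A^{binom n 2}, represented as a function on ordered pairs
   of alternatives with the convention d j i = - d i j. *)
Definition pairvec (R : realFieldType) (n : nat) := 'I_n -> 'I_n -> R.

Definition antisym (R : realFieldType) (n : nat) (d : pairvec R n) : Prop :=
  forall i j : 'I_n, d j i = - d i j.

Definition pinner (R : realFieldType) (n : nat) (x y : pairvec R n) : R :=
  \sum_(i < n) \sum_(j < n | (i < j)%N) x i j * y i j.

Definition strongly_transitive (R : realFieldType) (n : nat) (d : pairvec R n) : Prop :=
  antisym d /\ forall i j k : 'I_n, d i j + d j k = d i k.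

Definition is_st_projection (R : realFieldType) (n : nat) (d p : pairvec R n) : Prop :=
  strongly_transitive p /\
  forall s : pairvec R n, strongly_transitive s ->
    pinner (fun i j => d i j - p i j) s = 0.

Definition condorcet_winner (R : realFieldType) (n : nat) (d : pairvec R n) (j : 'I_n) : Prop :=
  forall k : 'I_n, k != j -> 0 < d j k.

Definition condorcet_loser (R : realFieldType) (n : nat) (d : pairvec R n) (j : 'I_n) : Prop :=
  forall k : 'I_n, k != j -> d j k < 0.

(** For every alternative [a], the vector [borda_dir a] with entries
    [[i = a] - [j = a]] is strongly transitive, and its inner product with an
    antisymmetric [x] is the Borda score [\sum_k x a k].  So projecting onto
    ST_A^n preserves every Borda score.  In a strongly transitive [p] all rows
    differ by a constant, [p a k - p b k = p a b], whence
    [n * p a b = borda_score p a - borda_score p b].  For [p = dst] this equals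
    [borda_score d a1 - borda_score d an], which is positive: the Condorcet
    winner has a positive, the Condorcet loser a negative Borda score. *)

From mathcomp Require Import all_boot all_order all_algebra.
From mathcomp Require Import zify ring lra.
Import Order.TTheory GRing.Theory Num.Theory.
Local Open Scope ring_scope.

Section Borda.

Context {R : realFieldType} {n : nat}.
Implicit Types (x y d p : pairvec R n) (a b : 'I_n).

Definition borda_score d a : R := \sum_(k < n) d a k.

Definition borda_dir a : pairvec R n := fun i j => (i == a)%:R - (j == a)%:R.

Lemma antisym_diag d a : antisym d -> d a a = 0.
Proof. by move=> /(_ a a); set t := d a a; lra. Qed.

Lemma antisym_opp {d} : antisym d -> antisym (fun i j => - d i j).
Proof. by move=> hd i j; rewrite hd. Qed.

Lemma antisym_sub {x y} : antisym x -> antisym y -> antisym (fun i j => x i j - y i j).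
Proof. by move=> hx hy i j; rewrite hx hy opprD. Qed.

Lemma sum_mul_antisym {x y} : antisym x -> antisym y ->
  \sum_(i < n) \sum_(j < n) x i j * y i j = 2%:R * pinner x y.
Proof.
move=> hx hy; pose f i j := x i j * y i j.
have f_sym i j : f i j = f j i by rewrite /f hx hy mulrNN.
have f_split i j :
    f i j = (if (i < j)%N then f i j else 0) + (if (j < i)%N then f j i else 0).
  case: (ltngtP i j) => [_|_|/val_inj ->]; rewrite ?addr0 ?add0r //.
  by rewrite /f antisym_diag ?mul0r.
under eq_bigr => i _ do under eq_bigr => j _ do rewrite -/(f i j) f_split.
under eq_bigr => i _ do rewrite big_split /=.
rewrite big_split /= [X in _ + X]exchange_big /= mulr2n mulrDl mul1r /pinner.
by congr (_ + _); apply: eq_bigr => i _; rewrite -big_mkcond.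
Qed.

Lemma borda_dir_st a : strongly_transitive (borda_dir a).
Proof. by split=> [i j|i j k]; rewrite /borda_dir; ring. Qed.

Lemma pinner_borda_dir {x} a : antisym x -> pinner x (borda_dir a) = borda_score x a.
Proof.
move=> hx; have := sum_mul_antisym hx (borda_dir_st a).1.
have pick (F : 'I_n -> R) : \sum_(i < n) (i == a)%:R * F i = F a.
  by under eq_bigr => i _ do rewrite mulr_natl mulrb; rewrite -big_mkcond big_pred1_eq.
have row_sum : \sum_(i < n) \sum_(j < n) x i j * (i == a)%:R = borda_score x a.
  rewrite -pick; apply: eq_bigr => i _; rewrite mulr_sumr.
  by apply: eq_bigr => j _; rewrite mulrC.
have col_sum : \sum_(i < n) \sum_(j < n) x i j * (j == a)%:R = - borda_score x a.
  rewrite exchange_big /= (eq_bigr (fun j => (j == a)%:R * \sum_(i < n) x i j)).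
    by rewrite pick /borda_score -sumrN; apply: eq_bigr => i _; rewrite hx.
  by move=> j _; rewrite mulr_sumr; apply: eq_bigr => i _; rewrite mulrC.
rewrite /borda_dir; under eq_bigr => i _ do under eq_bigr => j _ do rewrite mulrBr.
under eq_bigr => i _ do rewrite sumrB.
by rewrite sumrB row_sum col_sum opprK; lra.
Qed.

Lemma st_projection_borda {d p} a : antisym d -> is_st_projection d p ->
  borda_score p a = borda_score d a.
Proof.
move=> hd [[hp _] orth]; have := orth _ (borda_dir_st a).
rewrite (pinner_borda_dir a (antisym_sub hd hp)) /borda_score /= sumrB => /eqP.
by rewrite subr_eq0 eq_sym => /eqP.
Qed.

Lemma st_borda_diff {p} a b : strongly_transitive p ->
  borda_score p a - borda_score p b = n%:R * p a b.
Proof.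
move=> [hp ptrans]; rewrite /borda_score -sumrB.
under eq_bigr => k _ do rewrite (hp k b) opprK ptrans.
by rewrite sumr_const card_ord mulr_natl.
Qed.

Lemma borda_score_gt0 {d a b} : antisym d -> b != a ->
  condorcet_winner d a -> 0 < borda_score d a.
Proof.
move=> hd hba hw; rewrite /borda_score (bigD1 b) //=.
apply: ltr_pwDl; first exact: hw.
apply: sumr_ge0 => k _; have [->|hka] := eqVneq k a.
  by rewrite antisym_diag.
exact/ltW/hw.
Qed.

Lemma borda_score_lt0 {d a b} : antisym d -> b != a ->
  condorcet_loser d a -> borda_score d a < 0.
Proof.
move=> hd hba hl; rewrite -oppr_gt0 /borda_score -sumrN.
by apply: (borda_score_gt0 (antisym_opp hd) hba) => k /hl; rewrite oppr_gt0.
Qed.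

End Borda.

Theorem theorem3 (R : realFieldType) (n : nat) (hn : (3 <= n)%N)
  (d : pairvec R n) (hd : antisym d) (a1 an : 'I_n)
  (ha1 : nat_of_ord a1 = 0%N) (han : nat_of_ord an = n.-1)
  (hw : condorcet_winner d a1)
  (hwu : forall j : 'I_n, condorcet_winner d j -> j = a1)
  (hl : condorcet_loser d an)
  (hlu : forall j : 'I_n, condorcet_loser d j -> j = an)
  (dst : pairvec R n) (hdst : is_st_projection d dst) :
  0 < dst a1 an.
Proof.
have an_neq_a1 : an != a1 by apply/eqP => /(congr1 val); rewrite /= ha1 han; lia.
have winner_pos := borda_score_gt0 hd an_neq_a1 hw.
have loser_neg := borda_score_lt0 hd (contra_neq esym an_neq_a1) hl.
have := st_borda_diff a1 an hdst.1.
rewrite !(st_projection_borda _ hd hdst) => borda_gap.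
have : 0 < n%:R * dst a1 an by rewrite -borda_gap; lra.
by rewrite pmulr_rgt0 // ltr0n; lia.
Qed.
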